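(* Let $\mathcal C=\{a_1C^1,\ldots,a_mC^m\}$ be a complete graph decomposition of a weighted graph $H=H(V,w)$, where $C^j$ has vertex set $V_j$. For each $u\in V$, let $\lambda(\mathcal C_u)$ be the sum of the smallest eigenvalues of the weighted graphs $a_jC^j$ with $u\in V_j$, and let $\lambda(\mathcal C)=\min_u\lambda(\mathcal C_u)$. Then $\lambda(H)\ge\lambda(\mathcal C)$. Moreover, equality holds if and only if there is a nonzero real vector $x=(x_u)_{u\in V}$ such that (1) $x_u=0$ whenever $\lambda(\mathcal C_u)>\lambda(\mathcal C)$; and (2) $x$ is constant on $V_j$ for every $j$ with $a_j<0$, and $\sum_{u\in V_j}x_u=0$ for every $j$ with $a_j>0$ and $|V_j|>1$.
   Context: A weighted graph $H(V,w)$ consists of a finite vertex set $V$ and a real function $w$ on unordered pairs $\{u,v\}$ of vertices (including $u=v$); its adjacency matrix $A(w)$ has $(u,v)$-entry $w(uv)$, and $\lambda(H)$ is its smallest eigenvalue. A decomposition of $H$ is a family of weighted graphs $H^j(V_j,w_j)$ with $V_j\subseteq V$ and $w(uv)=\sum_j w_j(uv)$ for all pairs, where $w_j(uv)=0$ if $u$ or $v$ is not in $V_j$. A complete graph decomposition is a decomposition in which each member is $a_jC^j$ with $a_j$ a nonzero real number and $C^j$ either the simple complete graph on $V_j$ ($|V_j|\ge 2$; weight $a_j$ on every pair of distinct vertices of $V_j$ and $0$ on loops) or the looped complete graph on $V_j$ ($|V_j|\ge1$; weight $a_j$ on every pair of vertices of $V_j$, including each loop $uu$). The complete graphs need not be subgraphs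 of $H$. *)

From HB Require Import structures.
From mathcomp Require Import all_boot all_order all_algebra.
From Stdlib Require Import ClassicalEpsilon.
Set Implicit Arguments. Unset Strict Implicit. Unset Printing Implicit Defensive.
Import Order.TTheory GRing.Theory Num.Theory.
Local Open Scope ring_scope.

(* Adjacency matrix A(w) of a weighted graph on vertex set 'I_n;
   w u v is the weight of the unordered pair {u,v} (w is required symmetric). *)
Definition adjmx (R : rcfType) (n : nat) (w : 'I_n -> 'I_n -> R) : 'M[R]_n :=
  \matrix_(u, v) w u v.

(* Smallest eigenvalue of a square matrix (chosen by Hilbert's epsilon; it is
   the unique l that is an eigenvalue and below every eigenvalue, which exists
   for real symmetric matrices). *)
Definition is_min_eig (R : rcfType) (n : nat) (A : 'M[R]_n) (l : R) : Prop :=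
  eigenvalue A l /\ (forall a, eigenvalue A a -> l <= a).

Definition lambda_min (R : rcfType) (n : nat) (A : 'M[R]_n) : R :=
  epsilon (inhabits 0) (is_min_eig A).

(* Adjacency matrix of the weighted graph a*C, where C is the complete graph on
   the vertex set S (looped if lp = true, simple otherwise); rows/columns are
   indexed by 'I_#|S| (vertex enum_val i of S). *)
Definition cg_mx (R : rcfType) (n : nat) (S : {set 'I_n}) (lp : bool) (a : R)
  : 'M[R]_#|S| :=
  \matrix_(i, k) (if lp || (i != k) then a else 0).

Definition cg_w (R : rcfType) (n : nat) (S : {set 'I_n}) (lp : bool) (a : R)
  (u v : 'I_n) : R :=
  if (u \in S) && (v \in S) && (lp || (u != v)) then a else 0.

Definition lamCu (R : rcfType) (n m : nat) (Vs : 'I_m -> {set 'I_n})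
  (lp : 'I_m -> bool) (a : 'I_m -> R) (u : 'I_n) : R :=
  \sum_(j < m | u \in Vs j) lambda_min (cg_mx (Vs j) (lp j) (a j)).

Definition lamC (R : rcfType) (n m : nat) (Vs : 'I_m -> {set 'I_n.+1})
  (lp : 'I_m -> bool) (a : 'I_m -> R) : R :=
  \big[Order.min/lamCu Vs lp a ord0]_(u < n.+1) lamCu Vs lp a u.

From HB Require Import structures.
From mathcomp Require Import all_boot all_order all_algebra.
From mathcomp Require Import complex polyrcf ring lra.
From Stdlib Require Import ClassicalEpsilon.
Set Implicit Arguments. Unset Strict Implicit. Unset Printing Implicit Defensive.
Import Order.TTheory GRing.Theory Num.Theory.
Local Open Scope ring_scope.

(* The quadratic form of A(w) is the sum of the quadratic forms of
   the members a_j C^j, and for a complete graph on k vertices the form is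
   explicit: a (sum y)^2 - [C simple] a (sum y^2).  Hence its excess over
   lambda(a_j C^j) |y on V_j|^2 is (-a/2) sum_{u,v} (y_u - y_v)^2 when a < 0,
   and a (sum y)^2 when a > 0 (or 0 for a single loop).  Summing over j,
   y A y - lambda(C) |y|^2 is the sum of these excesses and of
   sum_u y_u^2 (lambda(C_u) - lambda(C)), all nonnegative; at an eigenvector
   this gives lambda(H) >= lambda(C), and equality forces every excess to
   vanish, which is (1) and (2).  Conversely a nonzero x satisfying (1) and (2)
   is, on each V_j, an eigenvector of a_j C^j for its smallest eigenvalue, hence
   an eigenvector of A(w) for lambda(C). *)

Section SymmetricSpectrum.
Variable R : rcfType.

Lemma sum_sqr_eq0 (T : finType) (P : pred T) (F : T -> R) :
  \sum_(u | P u) F u ^+ 2 = 0 -> forall u, P u -> F u = 0.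
Proof.
move=> /psumr_eq0P F0 u Pu; apply/eqP; rewrite -sqrf_eq0; apply/eqP.
by apply: F0 => // v _; apply: sqr_ge0.
Qed.

Lemma rV_sqnorm_gt0 n (v : 'rV[R]_n) : v != 0 -> 0 < \sum_i v 0 i ^+ 2.
Proof.
move=> vnz; rewrite lt_def sumr_ge0 ?andbT => [|i _]; last exact: sqr_ge0.
apply: contraNN vnz => /eqP v0; apply/eqP/rowP => i; rewrite mxE.
exact: (sum_sqr_eq0 v0).
Qed.

Lemma eigenvector_form n (M : 'M[R]_n) (v : 'rV_n) l : v *m M = l *: v ->
  \sum_i \sum_j v 0 i * M i j * v 0 j = l * \sum_i v 0 i ^+ 2.
Proof.
move=> vM; rewrite exchange_big mulr_sumr; apply: eq_bigr => j _.
have := congr1 (fun N : 'M_(1, n) => N 0 j) vM; rewrite !mxE => vMj.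
by rewrite -mulr_suml vMj expr2 mulrA.
Qed.

(* A complex eigenvector [v] of [A] makes the eigenvalue the Rayleigh quotient
   [v A v^* / v v^*], which is real because [A] is real symmetric. *)
Lemma symmetric_mx_real_eigenvalue n (A : 'M[R]_n.+1) :
  (forall i j, A i j = A j i) -> exists l, eigenvalue A l.
Proof.
move=> Asym.
pose Ac := map_mx (real_complex R) A.
have [z /eigenvalueP [v vA vnz]] := eigenvalue_closed Ac (ltn0Sn n).
pose d := \sum_j v 0 j * (v 0 j)^*.
pose q := \sum_j \sum_i v 0 i * Ac i j * (v 0 j)^*.
have qE : q = z * d.
  rewrite /d mulr_sumr; apply: eq_bigr => j _.
  have := congr1 (fun M : 'M_(1, n.+1) => M 0 j) vA; rewrite !mxE => vAj.
  by rewrite mulrA -vAj mulr_suml.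
have qR : q^* = q.
  rewrite /q rmorph_sum /= exchange_big /=; apply: eq_bigr => j _.
  rewrite rmorph_sum /=; apply: eq_bigr => i _.
  rewrite !rmorphM /= conjCK !mxE [((A i j)%:C)%C^*]conj_Creal ?complex_real ?num_real // Asym.
  ring.
have d_ge0 : 0 <= d by apply: sumr_ge0 => j _; apply: mul_conjC_ge0.
have dnz : d != 0.
  apply/eqP => /psumr_eq0P d0; apply/negP: vnz; rewrite negbK.
  apply/eqP/rowP => j; rewrite mxE; apply/eqP; rewrite -mul_conjC_eq0.
  by apply/eqP; apply: d0 => // k _; apply: mul_conjC_ge0.
have zR : z \is Num.real.
  apply/CrealP; rewrite -(mulfK dnz z) -qE rmorphM /= fmorphV /= qR.
  by rewrite conj_Creal // ger0_real.
exists (complex.Re z).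
rewrite eigenvalue_root_char -(fmorph_root (real_complex R)).
match goal with |- is_true (root _ ?y) => have -> : y = z by exact: RRe_real end.
by rewrite map_char_poly -eigenvalue_root_char; apply/eigenvalueP; exists v.
Qed.

Lemma symmetric_mx_min_eigenvalue n (A : 'M[R]_n.+1) :
  (forall i j, A i j = A j i) -> exists l, is_min_eig A l.
Proof.
move=> /symmetric_mx_real_eigenvalue [l0 Al0].
have pnz : char_poly A != 0 by apply/monic_neq0/char_poly_monic.
have memE x : (x \in rootsR (char_poly A)) = eigenvalue A x.
  by rewrite -(roots_on_rootsR pnz) eigenvalue_root_char in_itv.
have sortedA : sorted <%R (rootsR (char_poly A)) by rewrite /rootsR sorted_roots.
case Es: (rootsR (char_poly A)) sortedA => [|l s] /= sortedA.
  by move: Al0; rewrite -memE Es.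
exists l; split=> [|b]; first by rewrite -memE Es mem_head.
rewrite -memE Es in_cons => /predU1P [-> //| bs].
by move: sortedA => /(order_path_min lt_trans) /allP /(_ b bs) /ltW.
Qed.

Lemma sum_setT (T : finType) (F : T -> R) : \sum_(i in [set: T]) F i = \sum_i F i.
Proof. by apply: eq_bigl => i; rewrite in_setT. Qed.

Lemma lambda_min_eq n (A : 'M[R]_n) l : is_min_eig A l -> lambda_min A = l.
Proof.
move=> [Al lmin].
have [Am mmin] := epsilon_spec (inhabits 0) (is_min_eig A) (ex_intro _ l (conj Al lmin)).
by apply: le_anti; rewrite (mmin _ Al) (lmin _ Am).
Qed.

End SymmetricSpectrum.

Section CompleteGraph.
Variable R : rcfType.
Implicit Types (lp : bool) (a : R).

Definition cg_entry (T : eqType) lp a (u v : T) : R :=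
  if lp || (u != v) then a else 0.

(* The smallest eigenvalue of [a J_k] (looped) or [a (J_k - I_k)] (simple):
   [J_k] has spectrum [{k, 0}], without [0] when [k = 1]. *)
Definition cg_lambda (k : nat) lp a : R :=
  if a < 0 then a * k%:R - (if lp then 0 else a)
  else if lp then (if k == 1 then a else 0) else - a.

Section OnSubset.
Variables (T : finType) (P : {set T}).

Definition cg_form lp a (y : T -> R) : R :=
  \sum_(u in P) \sum_(v in P) y u * cg_entry lp a u v * y v.

Definition cg_excess lp a (y : T -> R) : R :=
  cg_form lp a y - cg_lambda #|P| lp a * \sum_(u in P) y u ^+ 2.

Definition cg_compatible a (x : T -> R) : Prop :=
  (a < 0 -> forall u v, u \in P -> v \in P -> x u = x v) /\
  (0 < a -> (1 < #|P|)%N -> \sum_(u in P) x u = 0).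

Lemma cg_rowsum lp a (y : T -> R) u : u \in P ->
  \sum_(v in P) cg_entry lp a u v * y v =
  a * \sum_(v in P) y v - (if lp then 0 else a) * y u.
Proof.
move=> uP; rewrite /cg_entry; case: lp => /=; first by rewrite mul0r subr0 mulr_sumr.
rewrite (bigD1 u) //= eqxx mul0r add0r [X in _ = a * X - _](bigD1 u) //=.
rewrite mulrDr addrC addKr mulr_sumr; apply: eq_bigr => v /andP [_ vu].
by rewrite eq_sym vu.
Qed.

Lemma cg_formE lp a (y : T -> R) :
  cg_form lp a y =
  a * (\sum_(u in P) y u) ^+ 2 - (if lp then 0 else a) * \sum_(u in P) y u ^+ 2.
Proof.
transitivity (\sum_(u in P) y u * (a * \sum_(v in P) y v - (if lp then 0 else a) * y u)).
  apply: eq_bigr => u uP; under eq_bigr do rewrite -mulrA.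
  by rewrite -mulr_sumr cg_rowsum.
rewrite (eq_bigr _ (fun u _ => mulrBr _ _ _)) sumrB -mulr_suml.
rewrite (eq_bigr _ (fun u _ => mulrCA _ _ _)) -mulr_sumr.
under [X in _ - _ * X = _]eq_bigr do rewrite -expr2.
ring.
Qed.

Lemma sum_sqr_diff (y : T -> R) :
  \sum_(u in P) \sum_(v in P) (y u - y v) ^+ 2 =
  2 * (#|P|%:R * \sum_(u in P) y u ^+ 2 - (\sum_(u in P) y u) ^+ 2).
Proof.
have sqrB u v : (y u - y v) ^+ 2 = (y u ^+ 2 + y v ^+ 2) - 2 * (y u * y v) by ring.
under eq_bigr do under eq_bigr do rewrite sqrB.
under eq_bigr do rewrite sumrB big_split /= sumr_const -!mulr_sumr.
rewrite sumrB big_split /= sumr_const -mulr_sumr -mulr_suml sumrMnl.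
rewrite -mulr_natr -[_ *+ #|P|]mulr_natr; ring.
Qed.

Lemma cg_excess_neg lp a (y : T -> R) : a < 0 ->
  cg_excess lp a y = - a / 2 * \sum_(u in P) \sum_(v in P) (y u - y v) ^+ 2.
Proof. by move=> a_lt0; rewrite /cg_excess cg_formE sum_sqr_diff /cg_lambda a_lt0; field. Qed.

Lemma cg_excess_nonneg lp a (y : T -> R) : 0 <= a ->
  cg_excess lp a y = if lp && (#|P| == 1) then 0 else a * (\sum_(u in P) y u) ^+ 2.
Proof.
move=> a_ge0; rewrite /cg_excess cg_formE /cg_lambda ltNge a_ge0 /=.
case: lp => /=; last ring.
have [/cards1P [x ->]|_] := boolP (#|P| == 1); last ring.
by rewrite !big_set1; ring.
Qed.

Lemma cg_excess_ge0 lp a (y : T -> R) : 0 <= cg_excess lp a y.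
Proof.
have [a_lt0|a_ge0] := ltP a 0.
  rewrite cg_excess_neg // mulr_ge0 //; first by rewrite divr_ge0 // oppr_ge0 ltW.
  by apply: sumr_ge0 => u _; apply: sumr_ge0 => v _; apply: sqr_ge0.
by rewrite cg_excess_nonneg //; case: ifP => // _; rewrite mulr_ge0 ?sqr_ge0.
Qed.

Lemma cg_excess_eq0_compatible lp a (y : T -> R) :
  cg_excess lp a y = 0 -> cg_compatible a y.
Proof.
move=> y0; split=> [a_lt0 u v uP vP | a_gt0 P_gt1].
  move: y0; rewrite cg_excess_neg // => /eqP.
  rewrite !mulf_eq0 invr_eq0 pnatr_eq0 oppr_eq0 (lt_eqF a_lt0) /= => /eqP /psumr_eq0P y0.
  have /sum_sqr_eq0 /(_ v vP) /eqP : \sum_(v in P) (y u - y v) ^+ 2 = 0.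
    by apply: y0 => // i _; apply: sumr_ge0 => j _; apply: sqr_ge0.
  by rewrite subr_eq0 => /eqP.
move: y0; rewrite cg_excess_nonneg ?ltW // gtn_eqF // andbF => /eqP.
by rewrite mulf_eq0 (gt_eqF a_gt0) sqrf_eq0 => /eqP.
Qed.

Lemma cg_rowsum_compatible lp a (x : T -> R) v :
  a != 0 -> ((if lp then 1 else 2) <= #|P|)%N -> cg_compatible a x -> v \in P ->
  \sum_(u in P) cg_entry lp a v u * x u = cg_lambda #|P| lp a * x v.
Proof.
move=> anz Psize [x_neg x_pos] vP; rewrite cg_rowsum // /cg_lambda.
have [a_lt0|a_ge0] := ltP a 0.
  rewrite (eq_bigr (fun=> x v)) => [|u uP]; last exact: x_neg.
  by rewrite sumr_const -mulr_natr; ring.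
have a_gt0 : 0 < a by rewrite lt_def anz.
have [P_gt1|P_le1] := ltnP 1 #|P|.
  by rewrite x_pos // gtn_eqF //; case: (lp) => /=; ring.
have P1 : #|P| = 1 by apply/anti_leq; rewrite P_le1 card_gt0; apply/set0Pn; exists v.
move: Psize; rewrite P1; case: lp => //= _.
have /cards1P [z Pz] : #|P| == 1 by rewrite P1.
by move: vP; rewrite Pz in_set1 => /eqP ->; rewrite big_set1 mul0r subr0.
Qed.

End OnSubset.

Lemma cg_compatible_witness k lp a :
  a != 0 -> ((if lp then 1 else 2) <= k)%N ->
  exists2 x : 'I_k -> R, exists i, x i != 0 & cg_compatible [set: 'I_k] a x.
Proof.
move=> anz ksize; have k_gt0 : (0 < k)%N by apply: leq_trans ksize; case: lp.
have [a_lt0|a_ge0] := ltP a 0.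
  exists (fun=> 1); first by exists (Ordinal k_gt0); rewrite oner_eq0.
  by split=> // a_gt0; move: (lt_trans a_gt0 a_lt0); rewrite ltxx.
have [k_gt1|k_le1] := ltnP 1 k; last first.
  exists (fun=> 1); first by exists (Ordinal k_gt0); rewrite oner_eq0.
  by split=> [|_]; rewrite ?ltNge ?a_ge0 // cardsT card_ord ltnNge k_le1.
pose i0 : 'I_k := Ordinal (ltnW k_gt1); pose i1 : 'I_k := Ordinal k_gt1.
exists (fun i => (i == i0)%:R - (i == i1)%:R); first by exists i0; rewrite eqxx subr0 oner_eq0.
split=> [|_ _]; first by rewrite ltNge a_ge0.
have sum_indicator (j : 'I_k) : \sum_(i in [set: 'I_k]) (i == j)%:R = 1 :> R.
  by rewrite (bigD1 j) ?in_setT //= eqxx big1 ?addr0 // => i /andP [_ /negPf ->].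
by rewrite sumrB !sum_indicator subrr.
Qed.

Lemma cg_matrix_min_eig k lp a : a != 0 -> ((if lp then 1 else 2) <= k)%N ->
  is_min_eig (\matrix_(i, j) cg_entry lp a i j : 'M[R]_k) (cg_lambda k lp a).
Proof.
move=> anz ksize; have kT : #|[set: 'I_k]| = k by rewrite cardsT card_ord.
split=> [|l /eigenvalueP [v vM vnz]].
  have [x [i0 xi0] x_compat] := cg_compatible_witness anz ksize.
  apply/eigenvalueP; exists (\row_i x i); last first.
    by apply: contraNneq xi0 => /rowP /(_ i0); rewrite !mxE => ->.
  have sizeT : ((if lp then 1 else 2) <= #|[set: 'I_k]|)%N by rewrite kT.
  apply/rowP => j; rewrite !mxE.
  have := cg_rowsum_compatible anz sizeT x_compat (in_setT j); rewrite kT sum_setT => <-.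
  apply: eq_bigr => i _.
  by rewrite !mxE mulrC /cg_entry eq_sym.
have := eigenvector_form vM; under eq_bigr do under eq_bigr do rewrite mxE.
move=> vMv; have := cg_excess_ge0 [set: 'I_k] lp a (fun i => v 0 i).
rewrite /cg_excess /cg_form kT !sum_setT.
under eq_bigr do rewrite sum_setT.
rewrite vMv -mulrBl pmulr_lge0 ?subr_ge0 //.
exact: rV_sqnorm_gt0.
Qed.

Lemma lambda_min_cg_mx n (S : {set 'I_n}) lp a :
  a != 0 -> ((if lp then 1 else 2) <= #|S|)%N ->
  lambda_min (cg_mx S lp a) = cg_lambda #|S| lp a.
Proof. by move=> anz Ssize; apply/lambda_min_eq/cg_matrix_min_eig. Qed.

Lemma cg_w_form n (S : {set 'I_n}) lp a (y : 'I_n -> R) :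
  \sum_u \sum_v y u * cg_w S lp a u v * y v = cg_form S lp a y.
Proof.
rewrite /cg_form [RHS]big_mkcond; apply: eq_bigr => u _ /=.
case uS: (u \in S); last by rewrite big1 // => v _; rewrite /cg_w uS mulr0 mul0r.
rewrite [RHS]big_mkcond; apply: eq_bigr => v _ /=.
by rewrite /cg_w /cg_entry uS; case: (v \in S); rewrite //= mulr0 mul0r.
Qed.

Lemma cg_w_colsum n (S : {set 'I_n}) lp a (x : 'I_n -> R) v :
  \sum_u x u * cg_w S lp a u v =
  if v \in S then \sum_(u in S) cg_entry lp a v u * x u else 0.
Proof.
case vS: (v \in S); last by rewrite big1 // => u _; rewrite /cg_w vS andbF mulr0.
rewrite [RHS]big_mkcond; apply: eq_bigr => u _ /=.
rewrite /cg_w /cg_entry vS andbT eq_sym mulrC.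
by case: (u \in S); rewrite //= mul0r.
Qed.

End CompleteGraph.

Section Decomposition.
Variables (R : rcfType) (n m : nat) (w : 'I_n.+1 -> 'I_n.+1 -> R).
Variables (Vs : 'I_m -> {set 'I_n.+1}) (lp : 'I_m -> bool) (a : 'I_m -> R).
Hypothesis a_nz : forall j, a j != 0.
Hypothesis Vs_size : forall j, ((if lp j then 1 else 2) <= #|Vs j|)%N.
Hypothesis w_dec : forall u v, w u v = \sum_(j < m) cg_w (Vs j) (lp j) (a j) u v.

Lemma lamCuE u :
  lamCu Vs lp a u = \sum_(j < m | u \in Vs j) cg_lambda #|Vs j| (lp j) (a j).
Proof. by apply: eq_bigr => j _; rewrite lambda_min_cg_mx. Qed.

Lemma lamC_le_lamCu u : lamC Vs lp a <= lamCu Vs lp a u.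
Proof. exact: bigmin_le. Qed.

Definition vertex_excess (y : 'I_n.+1 -> R) : R :=
  \sum_u y u ^+ 2 * (lamCu Vs lp a u - lamC Vs lp a).

Lemma vertex_excess_term_ge0 (y : 'I_n.+1 -> R) u :
  0 <= y u ^+ 2 * (lamCu Vs lp a u - lamC Vs lp a).
Proof. by rewrite mulr_ge0 ?sqr_ge0 // subr_ge0 lamC_le_lamCu. Qed.

Lemma adjmx_form_excess (y : 'I_n.+1 -> R) :
  \sum_u \sum_v y u * w u v * y v - lamC Vs lp a * \sum_u y u ^+ 2 =
  \sum_j cg_excess (Vs j) (lp j) (a j) y + vertex_excess y.
Proof.
have formE : \sum_u \sum_v y u * w u v * y v = \sum_j cg_form (Vs j) (lp j) (a j) y.
  under [RHS]eq_bigr do rewrite -cg_w_form.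
  transitivity (\sum_u \sum_v \sum_j y u * cg_w (Vs j) (lp j) (a j) u v * y v).
    by apply: eq_bigr => u _; apply: eq_bigr => v _; rewrite w_dec mulr_sumr mulr_suml.
  by rewrite [RHS]exchange_big; apply: eq_bigr => u _; rewrite exchange_big.
have lamCuE' : \sum_u y u ^+ 2 * lamCu Vs lp a u =
    \sum_j cg_lambda #|Vs j| (lp j) (a j) * \sum_(u in Vs j) y u ^+ 2.
  under eq_bigr do rewrite lamCuE mulr_sumr big_mkcond.
  rewrite exchange_big; apply: eq_bigr => j _.
  rewrite mulr_sumr [RHS]big_mkcond; apply: eq_bigr => u _ /=.
  by case: (u \in Vs j); rewrite // mulrC.
rewrite /vertex_excess /cg_excess formE sumrB.
under [X in _ = _ + X]eq_bigr do rewrite mulrBr.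
rewrite sumrB lamCuE' -mulr_suml; ring.
Qed.

Lemma eigenvector_excess l (v : 'rV_n.+1) : v *m adjmx w = l *: v ->
  (l - lamC Vs lp a) * \sum_u v 0 u ^+ 2 =
  \sum_j cg_excess (Vs j) (lp j) (a j) (fun u => v 0 u) + vertex_excess (fun u => v 0 u).
Proof.
move=> vM; rewrite -adjmx_form_excess mulrBl -(eigenvector_form vM).
by under eq_bigr do under eq_bigr do rewrite mxE.
Qed.

Lemma lamC_le_eigenvalue l : eigenvalue (adjmx w) l -> lamC Vs lp a <= l.
Proof.
move=> /eigenvalueP [v vM vnz].
have : 0 <= (l - lamC Vs lp a) * \sum_u v 0 u ^+ 2.
  rewrite (eigenvector_excess vM) addr_ge0 ?sumr_ge0 // => [j _|u _].
    exact: cg_excess_ge0.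
  exact: vertex_excess_term_ge0.
by rewrite pmulr_lge0 ?subr_ge0 // rV_sqnorm_gt0.
Qed.

Definition tight (x : 'I_n.+1 -> R) : Prop :=
  [/\ exists u, x u != 0,
      forall u, lamC Vs lp a < lamCu Vs lp a u -> x u = 0 &
      forall j, cg_compatible (Vs j) (a j) x].

Lemma eigenvalue_lamC_tight :
  eigenvalue (adjmx w) (lamC Vs lp a) -> exists x, tight x.
Proof.
move=> /eigenvalueP [v vM vnz]; exists (fun u => v 0 u).
have := eigenvector_excess vM; rewrite subrr mul0r => /esym /eqP.
rewrite paddr_eq0 ?sumr_ge0 // => [/andP [/eqP cg0 /eqP vx0]|j _|u _]; first last.
- exact: vertex_excess_term_ge0.
- exact: cg_excess_ge0.
split.
- apply/existsP; apply: contraNT vnz => /existsPn v0.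
  by apply/eqP/rowP => u; rewrite mxE; apply/eqP/negPn/v0.
- move=> u lt_u; move/psumr_eq0P: vx0 => /(_ (fun u _ => vertex_excess_term_ge0 _ u)).
  move=> /(_ u isT) /eqP; rewrite mulf_eq0 sqrf_eq0 subr_eq0 (gt_eqF lt_u) orbF.
  by move/eqP.
- move=> j; apply: (cg_excess_eq0_compatible (lp := lp j)).
  by move/psumr_eq0P: cg0 => /(_ (fun j _ => cg_excess_ge0 _ _ _ _)) /(_ j isT).
Qed.

Lemma tight_eigenvalue_lamC x : tight x -> eigenvalue (adjmx w) (lamC Vs lp a).
Proof.
move=> [[u0 xu0] x_out x_comp]; apply/eigenvalueP; exists (\row_u x u); last first.
  by apply: contraNneq xu0 => /rowP /(_ u0); rewrite !mxE => ->.
apply/rowP => v; rewrite !mxE.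
under eq_bigr do rewrite !mxE w_dec mulr_sumr.
rewrite exchange_big /=.
under eq_bigr do rewrite cg_w_colsum.
transitivity (\sum_j (if v \in Vs j then cg_lambda #|Vs j| (lp j) (a j) * x v else 0)).
  apply: eq_bigr => j _; case: ifP => // vVj.
  exact: cg_rowsum_compatible.
rewrite -big_mkcond -mulr_suml -lamCuE.
have [-> | xv] := eqVneq (x v) 0; first by rewrite !mulr0.
congr (_ * _); apply: le_anti; rewrite lamC_le_lamCu andbT leNgt.
by apply: contra xv => /x_out ->.
Qed.

End Decomposition.

Theorem mainTheorem2 (R : rcfType) (n m : nat)
  (w : 'I_n.+1 -> 'I_n.+1 -> R)
  (Vs : 'I_m -> {set 'I_n.+1}) (lp : 'I_m -> bool) (a : 'I_m -> R)
  (w_sym : forall u v, w u v = w v u)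
  (a_nz : forall j, a j != 0)
  (Vs_size : forall j, ((if lp j then 1 else 2) <= #|Vs j|)%N)
  (w_dec : forall u v, w u v = \sum_(j < m) cg_w (Vs j) (lp j) (a j) u v) :
  lamC Vs lp a <= lambda_min (adjmx w) /\
  (lambda_min (adjmx w) = lamC Vs lp a <->
   exists x : 'I_n.+1 -> R,
     (exists u, x u != 0) /\
     (forall u, lamC Vs lp a < lamCu Vs lp a u -> x u = 0) /\
     (forall j, a j < 0 -> forall u v, u \in Vs j -> v \in Vs j -> x u = x v) /\
     (forall j, 0 < a j -> (1 < #|Vs j|)%N -> \sum_(u in Vs j) x u = 0)).
Proof.
have [l0 [l0_eig l0_min]] : exists l0, is_min_eig (adjmx w) l0.
  by apply: symmetric_mx_min_eigenvalue => i j; rewrite !mxE w_sym.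
have lamC_le := lamC_le_eigenvalue a_nz Vs_size w_dec.
rewrite (lambda_min_eq (conj l0_eig l0_min)); split; first exact: lamC_le.
have -> : l0 = lamC Vs lp a <-> eigenvalue (adjmx w) (lamC Vs lp a).
  split=> [<- // | /l0_min l0_le].
  by apply: le_anti; rewrite l0_le lamC_le.
split=> [|[x [x_nz [x_out [x_neg x_pos]]]]].
  move=> /(eigenvalue_lamC_tight a_nz Vs_size w_dec) [x [x_nz x_out x_comp]].
  exists x; do 2!split=> //.
  by split=> j; [apply: (x_comp j).1 | apply: (x_comp j).2].
apply: (tight_eigenvalue_lamC a_nz Vs_size w_dec (x := x)).
by split=> // j; split; [apply: x_neg | apply: x_pos].
Qed.
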